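(* Let $X$ be a proper subset of $\{\mathrm{CONV},\mathrm{CA},\mathrm{REF},\mathrm{IAP}\}$ with $\mathrm{IAP}\in X$. Then there exists an infinite biosphere $(G,t)$ such that $\bigcap X$ (the set of $G$-subsets lying in every member of $X$, computed in $G$) is not upward generic.
   Context: An infinite biosphere is a directed graph $G$ together with a function $t$ assigning a real number $t(v)$ to each vertex, such that: (1) if $v$ is a parent of $w$ (edge from $v$ to $w$) then $t(v)<t(w)$; (2) for every $r\in\mathbb R$ at most finitely many vertices $v$ have $t(v)<r$; (3) every vertex has finitely many children; (4) $G$ is infinite. $v$ is an ancestor of $w$ (and $w$ a descendant of $v$) if there is a directed path $v=v_1,\dots,v_n=w$ with $n>1$. A $G$-subset is a set of vertices. $\mathrm{IAP}$: $G$-subsets $S$ such that no $v\in S$ has both infinitely many descendants in $S$ and infinitely many non-descendants in $S$. $\mathrm{CONV}$: $G$-subsets $S$ such that every $v\in G$ having an ancestor in $S$ and a descendant in $S$ lies in $S$. $\mathrm{CA}$: $G$-subsets $S$ for which there exists $v\in S$ such that every $w\in S$ with $w\neq v$ is a descendant of $v$. $\mathrm{REF}$: $G$-subsets $S$ such that every $v\in S$ with infinitely many descendants in $G$ has infinitely many descendants in $S$. For a nonempty linear order $(Y,<)$, an ascending chain of $G$-subsets indexed by $Y$ is a family $\{C_\alpha\}_{\alpha\in Y}$ with $C_\alpha\subseteq C_\beta$ whenever $\alpha<\beta$. A set $T$ of $G$-subsets is upward generic if for every ascending chain $\{C_\alpha\}_{\alpha\in Y}$ of nonempty $G$-subsets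 with each $C_\alpha\in T$, $\bigcup_\alpha C_\alpha\in T$. *)

From Stdlib Require Import Reals List Relations.
Open Scope R_scope.

Definition finite_pred {V : Type} (P : V -> Prop) : Prop :=
  exists l : list V, forall v, P v -> In v l.

(* A directed graph on vertex type V with edge relation E (E v w : v is a
   parent of w), together with t : V -> R. *)
Record biosphere (V : Type) (E : V -> V -> Prop) (t : V -> R) : Prop := {
  bio_edge : forall v w, E v w -> t v < t w;
  bio_below : forall r : R, finite_pred (fun v => t v < r);
  bio_children : forall v, finite_pred (fun w => E v w);
  bio_infinite : ~ finite_pred (fun _ : V => True)
}.

Definition descendant {V : Type} (E : V -> V -> Prop) (v w : V) : Prop :=
  clos_trans V E v w.

Definition Gsubset (V : Type) := V -> Prop.

Definition IAP {V} (E : V -> V -> Prop) (S : Gsubset V) : Prop :=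
  forall v, S v ->
    ~ ( ~ finite_pred (fun w => S w /\ descendant E v w)
      /\ ~ finite_pred (fun w => S w /\ ~ descendant E v w)).

Definition CONV {V} (E : V -> V -> Prop) (S : Gsubset V) : Prop :=
  forall v, (exists a, S a /\ descendant E a v) ->
            (exists d, S d /\ descendant E v d) -> S v.

Definition CA {V} (E : V -> V -> Prop) (S : Gsubset V) : Prop :=
  exists v, S v /\ forall w, S w -> w <> v -> descendant E v w.

Definition REF {V} (E : V -> V -> Prop) (S : Gsubset V) : Prop :=
  forall v, S v -> ~ finite_pred (fun w => descendant E v w) ->
    ~ finite_pred (fun w => S w /\ descendant E v w).

Inductive prop_name : Type := pCONV | pCA | pREF | pIAP.

Definition holds {V} (E : V -> V -> Prop) (p : prop_name) (S : Gsubset V) : Prop :=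
  match p with
  | pCONV => CONV E S
  | pCA => CA E S
  | pREF => REF E S
  | pIAP => IAP E S
  end.

Definition strict_linear_order (Y : Type) (lt : Y -> Y -> Prop) : Prop :=
  (forall a, ~ lt a a) /\
  (forall a b c, lt a b -> lt b c -> lt a c) /\
  (forall a b, lt a b \/ a = b \/ lt b a).

Definition upward_generic {V : Type} (T : Gsubset V -> Prop) : Prop :=
  forall (Y : Type) (lt : Y -> Y -> Prop) (C : Y -> Gsubset V),
    strict_linear_order Y lt -> inhabited Y ->
    (forall a b, lt a b -> forall v, C a v -> C b v) ->
    (forall a, exists v, C a v) ->
    (forall a, T (C a)) ->
    T (fun v => exists a, C a v).

(* Everything happens in one biosphere: a root with two infinite branches
   a_0 -> a_1 -> ... and c_0 -> c_1 -> ..., where each c_k also has a leaf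
   child b_k.  For each property p other than IAP there is an ascending chain
   of sets satisfying IAP and the two remaining properties: without CONV take
   the root, the a-branch and b_0, ..., b_n; without CA the a-branch and
   b_0, ..., b_n; without REF the root, a_0, ..., a_n and c_0, ..., c_n.  Each
   union contains the whole a-branch and infinitely many vertices outside it,
   so it violates IAP at a_0. *)

From Stdlib Require Import Reals List Relations Lia Lra Setoid Morphisms.

Lemma finite_pred_weaken {V : Type} (P Q : V -> Prop) :
  (forall v, P v -> Q v) -> finite_pred Q -> finite_pred P.
Proof. intros HPQ [l Hl]. exists l. auto. Qed.

#[local] Instance finite_pred_Proper {V : Type} :
  Proper (pointwise_relation V iff ==> iff) (@finite_pred V).
Proof.
  intros P Q HPQ. split; apply finite_pred_weaken; intro v; apply HPQ.
Qed.

Lemma not_finite_pred_of_section {V : Type} (level : V -> nat) (f : nat -> V)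
    (P : V -> Prop) (m : nat) :
  (forall n, level (f n) = n) -> (forall n, (m <= n)%nat -> P (f n)) ->
  ~ finite_pred P.
Proof.
  intros Hf HP [l Hl].
  set (N := Nat.max m (S (list_max (map level l)))).
  assert (Hin : In (f N) l) by (apply Hl, HP; lia).
  assert (Hle : (level (f N) <= list_max (map level l))%nat).
  { assert (Hall := proj1 (list_max_le (map level l) _) (Nat.le_refl _)).
    rewrite Forall_forall in Hall. apply Hall, in_map, Hin. }
  rewrite Hf in Hle. lia.
Qed.

Lemma clos_trans_seq {V : Type} (E : V -> V -> Prop) (f : nat -> V) :
  (forall n, E (f n) (f (S n))) ->
  forall j k, (j < k)%nat -> clos_trans V E (f j) (f k).
Proof.
  intros Hf j k Hjk. induction k as [|k IH]; [lia|].
  destruct (Nat.eq_dec j k) as [->|Hne]; [now apply t_step|].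
  apply t_trans with (f k); [apply IH; lia | now apply t_step].
Qed.

Lemma IAP_of_finite {V : Type} (E : V -> V -> Prop) (S : Gsubset V) :
  finite_pred S -> IAP E S.
Proof.
  intros Hfin v _ [_ Hnondesc]. apply Hnondesc.
  apply finite_pred_weaken with S; [tauto | exact Hfin].
Qed.

Lemma not_upward_generic_of_nat_chain {V : Type} (T : Gsubset V -> Prop)
    (C : nat -> Gsubset V) :
  (forall m n v, (m <= n)%nat -> C m v -> C n v) ->
  (forall n, exists v, C n v) ->
  (forall n, T (C n)) ->
  ~ T (fun v => exists n, C n v) ->
  ~ upward_generic T.
Proof.
  intros Hmono Hne HT Hunion HU. apply Hunion.
  apply (HU nat lt C); auto.
  - split; [|split]; intros; lia.
  - exact (inhabits 0%nat).
  - intros a b Hab v. apply Hmono. lia.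
Qed.

Inductive vertex : Type :=
  | root
  | vA (n : nat)
  | vC (n : nat)
  | vB (n : nat).

Inductive edge : vertex -> vertex -> Prop :=
  | edge_root_A : edge root (vA 0)
  | edge_root_C : edge root (vC 0)
  | edge_A n : edge (vA n) (vA (S n))
  | edge_C n : edge (vC n) (vC (S n))
  | edge_CB n : edge (vC n) (vB n).

Definition time (v : vertex) : R :=
  match v with
  | root => 0
  | vA n | vC n => INR n + 1
  | vB n => INR n + 2
  end.

Definition level (v : vertex) : nat :=
  match v with root => 0 | vA n | vC n | vB n => n end.

Definition is_ancestor (v w : vertex) : Prop :=
  match v, w with
  | root, root => False
  | root, _ => True
  | vA j, vA k | vC j, vC k => (j < k)%nat
  | vC j, vB k => (j <= k)%nat
  | _, _ => False
  end.

Lemma is_ancestor_trans u v w :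
  is_ancestor u v -> is_ancestor v w -> is_ancestor u w.
Proof. destruct u, v, w; simpl; tauto || lia. Qed.

Lemma descendant_edge_iff v w : descendant edge v w <-> is_ancestor v w.
Proof.
  split.
  - induction 1 as [v w Hvw| u v w _ IHuv _ IHvw].
    + destruct Hvw; simpl; lia || tauto.
    + exact (is_ancestor_trans _ _ _ IHuv IHvw).
  - assert (HA := clos_trans_seq edge vA edge_A).
    assert (HC := clos_trans_seq edge vC edge_C).
    assert (HCB : forall j k, (j <= k)%nat -> descendant edge (vC j) (vB k)).
    { intros j k Hjk. destruct (Nat.eq_dec j k) as [->|Hne].
      - apply t_step, edge_CB.
      - apply t_trans with (vC k); [apply HC; lia | apply t_step, edge_CB]. }
    assert (HrootA : forall k, descendant edge root (vA k)).
    { intros [|k]; [now apply t_step, edge_root_A|].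
      apply t_trans with (vA 0); [apply t_step, edge_root_A | apply HA; lia]. }
    assert (HrootC : forall k, descendant edge root (vC k)).
    { intros [|k]; [now apply t_step, edge_root_C|].
      apply t_trans with (vC 0); [apply t_step, edge_root_C | apply HC; lia]. }
    destruct v, w; simpl; try tauto; intros H.
    + apply HrootA.
    + apply HrootC.
    + apply t_trans with (vC 0); [apply t_step, edge_root_C | apply HCB; lia].
    + now apply HA.
    + now apply HC.
    + now apply HCB.
Qed.

Lemma finite_pred_level_le (N : nat) (P : vertex -> Prop) :
  (forall v, P v -> (level v <= N)%nat) -> finite_pred P.
Proof.
  intros HP.
  exists (root :: map vA (seq 0 (S N)) ++ map vC (seq 0 (S N))
               ++ map vB (seq 0 (S N))).
  intros v Hv. specialize (HP v Hv).
  destruct v; simpl in HP; [now left|..]; right; rewrite !in_app_iff;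
    [left | right; left | right; right]; apply in_map, in_seq; lia.
Qed.

Lemma level_le_time v : INR (level v) <= time v.
Proof. destruct v; simpl; lra. Qed.

Lemma biosphere_edge : biosphere vertex edge time.
Proof.
  constructor.
  - intros v w Hvw. destruct Hvw; unfold time; rewrite ?S_INR, ?INR_0; lra.
  - intros r. destruct (archimed r) as [Hup _].
    apply finite_pred_level_le with (Z.to_nat (up r)). intros v Hv.
    assert (Hlt : INR (level v) < IZR (up r)) by (pose proof (level_le_time v); lra).
    rewrite INR_IZR_INZ in Hlt. apply lt_IZR in Hlt. lia.
  - intros [|n|n|n].
    + exists (vA 0 :: vC 0 :: nil). intros w Hw. inversion Hw; simpl; tauto.
    + exists (vA (S n) :: nil). intros w Hw. inversion Hw; simpl; tauto.
    + exists (vC (S n) :: vB n :: nil). intros w Hw. inversion Hw; simpl; tauto.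
    + exists nil. intros w Hw. inversion Hw.
  - apply (not_finite_pred_of_section level vA _ 0); auto.
Qed.

Lemma finite_descendants_B k : finite_pred (fun w => is_ancestor (vB k) w).
Proof. exists nil. intros [] []. Qed.

Lemma CA_of_root (S : Gsubset vertex) : S root -> CA edge S.
Proof.
  intros Hroot. exists root. split; [exact Hroot|].
  intros w _ Hw. apply descendant_edge_iff. destruct w; simpl; auto.
Qed.

Lemma not_IAP_of_A_branch (f : nat -> vertex) (S : Gsubset vertex) :
  (forall k, level (f k) = k) -> (forall k, ~ is_ancestor (vA 0) (f k)) ->
  (forall k, S (vA k)) -> (forall k, S (f k)) -> ~ IAP edge S.
Proof.
  intros Hlevel Hf HA HS HIAP. apply (HIAP (vA 0) (HA 0%nat)).
  setoid_rewrite descendant_edge_iff. split.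
  - apply (not_finite_pred_of_section level vA _ 1); [reflexivity|].
    intros n Hn. split; [apply HA | simpl; lia].
  - apply (not_finite_pred_of_section level f _ 0); [exact Hlevel|].
    intros n _. split; [apply HS | apply Hf].
Qed.

Definition witness_chain (p : prop_name) (n : nat) (v : vertex) : Prop :=
  match p, v with
  | pREF, root => True
  | pREF, (vA k | vC k) => (k <= n)%nat
  | pREF, vB _ => False
  | pCA, root => False
  | _, root => True
  | _, vA _ => True
  | _, vC _ => False
  | _, vB k => (k <= n)%nat
  end.

Lemma witness_chain_mono p m n v :
  (m <= n)%nat -> witness_chain p m v -> witness_chain p n v.
Proof. destruct p, v; simpl; auto; lia. Qed.

Lemma witness_chain_A0 p n : witness_chain p n (vA 0).
Proof. destruct p; simpl; auto; lia. Qed.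

Lemma witness_chain_IAP p n : IAP edge (witness_chain p n).
Proof.
  destruct p;
    [| | apply IAP_of_finite, finite_pred_level_le with n;
         intros [] ?; simpl in *; tauto || lia | ];
    (* otherwise a member has no descendants at all (a leaf b_j) or only
       finitely many non-descendants in the set *)
    intros v Hv; setoid_rewrite descendant_edge_iff; intros [Hdesc Hnondesc];
    destruct v as [|j|j|j]; simpl in Hv; try tauto.
  all: try (apply Hdesc, finite_pred_weaken with (is_ancestor (vB j));
            [tauto | apply finite_descendants_B]).
  all: apply Hnondesc;
       first [ apply finite_pred_level_le with (j + n)%nat
             | apply finite_pred_level_le with 0%nat ];
       intros [] [Hw Hanc]; simpl in *; tauto || lia.
Qed.

Lemma witness_chain_CONV p n : p <> pCONV -> p <> pIAP ->
  CONV edge (witness_chain p n).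
Proof.
  intros HCONV HIAP v [a [Ha Hav]] [d [Hd Hvd]].
  apply descendant_edge_iff in Hav, Hvd.
  destruct p; try congruence.
  - destruct a, v; simpl in *; tauto.
  - destruct v, d; simpl in *; tauto || lia.
Qed.

Lemma witness_chain_CA p n : p <> pCA -> CA edge (witness_chain p n).
Proof. intros HCA. apply CA_of_root. destruct p; simpl; tauto. Qed.

Lemma witness_chain_REF p n : p <> pREF -> REF edge (witness_chain p n).
Proof.
  intros HREF v Hv Hinf. setoid_rewrite descendant_edge_iff in Hinf.
  setoid_rewrite descendant_edge_iff.
  destruct v as [|j|j|j].
  - apply (not_finite_pred_of_section level vA _ 0); [reflexivity|].
    intros k _. destruct p; simpl; tauto.
  - apply (not_finite_pred_of_section level vA _ (S j)); [reflexivity|].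
    intros k Hk. destruct p; simpl; tauto || lia.
  - destruct p; simpl in Hv; tauto.
  - contradict Hinf. apply finite_descendants_B.
Qed.

Lemma witness_chain_holds p n q : p <> pIAP -> q <> p ->
  holds edge q (witness_chain p n).
Proof.
  intros HIAP Hqp. destruct q; simpl.
  - apply witness_chain_CONV; congruence.
  - apply witness_chain_CA; congruence.
  - apply witness_chain_REF; congruence.
  - apply witness_chain_IAP.
Qed.

Lemma not_IAP_witness_chain_union p :
  ~ IAP edge (fun v => exists n, witness_chain p n v).
Proof.
  destruct p;
    [apply (not_IAP_of_A_branch vB) | apply (not_IAP_of_A_branch vB)
    | apply (not_IAP_of_A_branch vC) | apply (not_IAP_of_A_branch vB)];
    intro k; simpl; auto; exists k; simpl; auto.
Qed.

Theorem mainTheorem7 :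
  forall X : prop_name -> Prop,
    X pIAP -> (exists p, ~ X p) ->
    exists (V : Type) (E : V -> V -> Prop) (t : V -> R),
      biosphere V E t /\
      ~ upward_generic (fun S : Gsubset V => forall p, X p -> holds E p S).
Proof.
  intros X HIAP [p Hp].
  exists vertex, edge, time. split; [exact biosphere_edge|].
  apply not_upward_generic_of_nat_chain with (C := witness_chain p).
  - apply witness_chain_mono.
  - intros n. exists (vA 0). apply witness_chain_A0.
  - intros n q Hq. apply witness_chain_holds; congruence.
  - intros Hunion. exact (not_IAP_witness_chain_union p (Hunion pIAP HIAP)).
Qed.
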